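(* Let $L$ be a connected $(\kappa,\ell)$-linkoid diagram, regarded as a generalized knotoid diagram. Then $\Omega_g(L)=\kappa-2$ if $L$ is spherical (in $S^2$), and $\Omega_g(L)=\kappa-1$ if $L$ is planar (in $\mathbb{R}^2$).
   Context: A $(\kappa,\ell)$-linkoid diagram is an immersion of $\kappa$ oriented intervals and $\ell$ oriented circles into a surface ($S^2$ for spherical, $\mathbb{R}^2$ for planar) whose only singularities are transverse double points (crossings) away from the interval endpoints, with over/under information. It is connected if the graph with crossings as degree-4 vertices and endpoints as degree-1 vertices is connected. As a generalized knotoid diagram on $S^2$, the endpoints are degree-1 nodes; a planar diagram is viewed in $S^2=\mathbb{R}^2\cup\{\infty\}$ with an additional degree-zero node at $\infty$. A region (complement component in $S^2$) counts as a disk region iff it contains no degree-zero node. With $n$ the number of crossings and $f_d$ the number of disk regions, $\Omega_g(L)=n-f_d$. *)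

From mathcomp Require Import all_boot all_order all_algebra.
Set Implicit Arguments. Unset Strict Implicit. Unset Printing Implicit Defensive.
Import GRing.Theory Num.Theory.

(* A map of a linkoid diagram graph: darts (half-edges), the fixed-point-free
   involution [edge] pairing the two darts of an edge, and the permutation
   [node] rotating the darts around their vertex (cyclic order given by the
   embedding in the oriented surface).  Vertices = [node]-orbits, faces
   (regions) = orbits of [face := node \o edge].  In a linkoid diagram every
   node is a crossing (degree 4, strands go straight through opposite darts)
   or an interval endpoint (degree 1). *)
Record linkoid_map := LinkoidMap {
  dart : finType;
  edge : dart -> dart;
  node : dart -> dart;
  edgeK : involutive edge;
  edge_nofix : forall x, edge x != x;
  node_inj : injective node;
  node_deg : forall x, (order node x == 1) || (order node x == 4)
}.

Section Counts.
Variable M : linkoid_map.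

Definition face (x : dart M) : dart M := @node M (@edge M x).

Definition num_vertices : nat := #|[set x : dart M | froot (@node M) x == x]|.
Definition num_edges : nat := #|dart M| %/ 2.
Definition num_faces : nat := #|[set x : dart M | froot face x == x]|.

Definition num_crossings : nat :=
  #|[set x : dart M | (froot (@node M) x == x) && (order (@node M) x == 4)]|.

(* interval endpoints = degree-1 nodes; each of the kappa intervals has two *)
Definition num_endpoints : nat := #|[set x : dart M | @node M x == x]|.
Definition kappa : nat := num_endpoints %/ 2.

Definition connected_diagram : Prop :=
  forall x y : dart M,
    connect (fun a b => (b == @edge M a) || (b == @node M a)) x y.

(* the map is embedded in S^2: genus 0, i.e. Euler characteristic 2 *)
Definition spherical : Prop := (num_vertices + num_faces = num_edges + 2)%N.

(* Spherical diagram: no degree-zero node, every region is a disk. *)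
Definition Omega_sphere : int := (num_crossings%:Z - num_faces%:Z)%R.

(* Planar diagram: S^2 = R^2 u {oo}, with the degree-zero node oo lying in
   the region (face) containing the dart [inf]; that region is not a disk. *)
Definition num_disk_faces_plane (inf : dart M) : nat :=
  #|[set x : dart M | (froot face x == x) && ~~ fconnect face inf x]|.
Definition Omega_plane (inf : dart M) : int :=
  (num_crossings%:Z - (num_disk_faces_plane inf)%:Z)%R.

End Counts.

From mathcomp Require Import all_boot all_order all_algebra.
From mathcomp Require Import zify.
Set Implicit Arguments. Unset Strict Implicit. Unset Printing Implicit Defensive.

(* Euler's formula V - E + F = 2 does all the work.  Every crossing has degree
   4 and each of the 2 kappa endpoints degree 1, so V = n + 2 kappa and
   2 E = 4 n + 2 kappa, whence n - F = kappa - 2.  In the plane exactly one of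
   the F regions, the one containing infinity, is not a disk: f_d = F - 1. *)

Lemma card_roots_off_component (T : finType) (e : rel T) (a : T) :
  connect_sym e ->
  #|[set x | roots e x && ~~ connect e a x]|.+1 =
  #|[set x | roots e x]|.
Proof.
move=> sym_e; rewrite -add1n -(n_comp_connect sym_e a).
have -> : #|[set x | roots e x]| = n_comp e T.
  by apply: eq_card => x; rewrite !inE andbT.
rewrite (n_compC (connect e a)); congr (_ + _).
by apply: eq_card => x; rewrite !inE.
Qed.

Section InjectiveOrbits.
Variables (T : finType) (f : T -> T).
Hypothesis f_inj : injective f.

Lemma order_eq1 x : (order f x == 1) = (f x == x).
Proof.
apply/eqP/eqP => [o1 | fx].
  by have := iter_order f_inj x; rewrite o1.
by apply: (@order_cycle _ _ [:: x]); rewrite /= ?fx ?inE ?eqxx.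
Qed.

Lemma fconnect_fixed x y : f x = x -> fconnect f x y = (y == x).
Proof.
by move=> fx; rewrite (@fconnect_cycle _ _ [:: x]) ?inE //= ?fx ?eqxx ?mem_head.
Qed.

Variable n : nat.
Hypothesis n_gt1 : 1 < n.
Hypothesis order1n : forall x, (order f x == 1) || (order f x == n).

Lemma card_order1n :
  #|T| = n * #|[set x | (froot f x == x) && (order f x == n)]|
         + #|[set x | f x == x]|.
Proof.
rewrite -(cardC (order_set f n)) mulnC; congr (_ + _).
  rewrite -(fcard_order_set f_inj (subxx _)); last first.
    by move=> x y /eqP <-; rewrite !inE (order_id_cycle (cycle_orbit f_inj x)).
  by congr (_ * _); apply: eq_card => x; rewrite !inE.
apply: eq_card => x; rewrite !inE -order_eq1.
by case/orP: (order1n x) => /eqP ->; lia.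
Qed.

Lemma card_roots_order1n :
  #|[set x | froot f x == x]| =
  #|[set x | (froot f x == x) && (order f x == n)]| + #|[set x | f x == x]|.
Proof.
rewrite -(cardID [set x | (froot f x == x) && (order f x == n)]); congr (_ + _).
  by apply: eq_card => x; rewrite !inE andbA andbb.
apply: eq_card => x; rewrite !inE -order_eq1.
case/orP: (order1n x) => /eqP ordx; rewrite ordx; last by lia.
have /eqP fx : f x == x by rewrite -order_eq1 ordx.
by rewrite -fconnect_fixed // connect_root; lia.
Qed.
End InjectiveOrbits.

Section FixfreeInvolution.
Variables (T : finType) (g : T -> T).
Hypotheses (gK : involutive g) (g_nofix : forall x, g x != x).

Lemma order_fixfree_involution x : order g x = 2.
Proof.
apply: (@order_cycle _ _ [:: x; g x]); rewrite /= ?gK ?inE ?eqxx //.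
by rewrite andbT eq_sym.
Qed.

Lemma dvdn2_card_fixfree_involution : 2 %| #|T|.
Proof.
rewrite -(@fcard_order_set _ _ (inv_inj gK) 2 T) ?dvdn_mull //.
by apply/subsetP => x _; rewrite inE order_fixfree_involution.
Qed.

End FixfreeInvolution.

Section LinkoidCounts.
Variable M : linkoid_map.

Lemma card_dart : #|dart M| = 4 * num_crossings M + num_endpoints M.
Proof. exact: (card_order1n (@node_inj M) _ (@node_deg M)). Qed.

Lemma num_verticesE : num_vertices M = num_crossings M + num_endpoints M.
Proof. exact: (card_roots_order1n (@node_inj M) _ (@node_deg M)). Qed.

Lemma num_edgesE : num_edges M * 2 = #|dart M|.
Proof.
exact/divnK/(dvdn2_card_fixfree_involution (@edgeK M) (@edge_nofix M)).
Qed.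

Lemma num_disk_faces_planeS (inf : dart M) :
  (num_disk_faces_plane inf).+1 = num_faces M.
Proof.
apply: card_roots_off_component; apply: fconnect_sym.
by move=> x y /(@node_inj M) /(inv_inj (@edgeK M)).
Qed.

End LinkoidCounts.

Theorem proposition3p23 (M : linkoid_map) :
  spherical M -> connected_diagram M ->
  (Omega_sphere M = ((kappa M)%:Z - 2)%R) /\
  (forall inf : dart M, Omega_plane inf = ((kappa M)%:Z - 1)%R).
Proof.
(* Connectedness enters only through Euler's formula, i.e. [spherical]. *)
rewrite /spherical /Omega_sphere /Omega_plane /kappa => euler _.
have darts := card_dart M; have edges := num_edgesE M.
have vertices := num_verticesE M.
split=> [|inf]; first lia.
by have := num_disk_faces_planeS inf; lia.
Qed.
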